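(* Suppose that $(R,\mathfrak m)$ is $F$-pure. Then $R$ has a unique largest proper fully $\Phi(E)$-special ideal, and this ideal is prime.
   Context: $(R,\mathfrak m)$ is a commutative Noetherian local ring of prime characteristic $p$. $R$ is $F$-pure if for every $R$-module $M$ the map $M\to R^{(1)}\otimes_RM$, $m\mapsto1\otimes m$, is injective ($R^{(1)}$ = $R$ with right structure via $r\mapsto r^p$). The Frobenius skew polynomial ring $R[x,f]$ consists of polynomials $\sum r_ix^i$, free left $R$-module on $(x^i)_{i\ge0}$, with $xr=r^px$. $E=E_R(R/\mathfrak m)$; $\Phi(E)=R[x,f]\otimes_RE=\bigoplus_nRx^n\otimes_RE$, with $0$th component identified with $E$. $\operatorname{ann}_{\Phi(E)}(\mathfrak aR[x,f])$ is the submodule of elements annihilated by all $rx^n$, $r\in\mathfrak a$, $n\ge0$; $\mathfrak a$ is fully $\Phi(E)$-special if $(0:_E\mathfrak a)$ is contained in the $0$th component of $\operatorname{ann}_{\Phi(E)}(\mathfrak aR[x,f])$. *)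

From HB Require Import structures.
From mathcomp Require Import all_boot all_order all_algebra.
Set Implicit Arguments. Unset Strict Implicit. Unset Printing Implicit Defensive.
Import GRing.Theory.
Local Open Scope ring_scope.

Section CommAlg.
Variable R : comNzRingType.

Definition is_idealP (I : R -> Prop) : Prop :=
  [/\ I 0, (forall x y, I x -> I y -> I (x + y)) & (forall r x, I x -> I (r * x))].

Definition proper_idealP (I : R -> Prop) : Prop := is_idealP I /\ ~ I 1.

Definition prime_idealP (I : R -> Prop) : Prop :=
  proper_idealP I /\ (forall x y, I (x * y) -> I x \/ I y).

Definition subideal (I J : R -> Prop) : Prop := forall x, I x -> J x.

Definition fin_generated (I : R -> Prop) : Prop :=
  exists s : seq R, forall x, I x <->
    exists c : seq R, size c = size s /\ x = \sum_(i < size s) c`_i * s`_i.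

Definition noetherian_ring : Prop :=
  forall I : R -> Prop, is_idealP I -> fin_generated I.

Definition local_ring (m : R -> Prop) : Prop :=
  proper_idealP m /\ (forall I, proper_idealP I -> subideal I m).

(* The bimodule R x^n of R[x,f]: left structure by multiplication, right
   structure (s x^n) r = s r^(p^n) x^n.  A map beta : R -> M -> N into an
   abelian group is "n-balanced" if it is biadditive and
   beta (s * r^(p^n)) v = beta s (r *: v).  The tensor product
   R x^n (x)_R M is the universal abelian group for such maps, so
   (s x^n) (x) v = 0 in R x^n (x)_R M iff every n-balanced map kills (s, v). *)
Definition frob_balanced (p n : nat) (M : lmodType R) (N : zmodType)
  (beta : R -> M -> N) : Prop :=
  [/\ (forall s s' v, beta (s + s') v = beta s v + beta s' v),
      (forall s v v', beta s (v + v') = beta s v + beta s v') &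
      (forall s r v, beta (s * r ^+ (p ^ n)) v = beta s (r *: v))].

Definition frob_tensor_zero (p n : nat) (M : lmodType R) (s : R) (v : M) : Prop :=
  forall (N : zmodType) (beta : R -> M -> N), frob_balanced p n beta -> beta s v = 0.

(* F-purity: for every R-module M, M -> R^(1) (x)_R M, v |-> 1 (x) v is injective. *)
Definition F_pure (p : nat) : Prop :=
  forall (M : lmodType R) (v : M), frob_tensor_zero p 1 1 v -> v = 0.

Definition injective_module (E : lmodType R) : Prop :=
  forall (M N : lmodType R) (f : {linear M -> N}) (g : {linear M -> E}),
    injective f -> exists h : {linear N -> E}, forall x, h (f x) = g x.

(* E is an injective hull E_R(R/m): E is injective and is an essential
   extension of a submodule R e0 isomorphic to R/m (i.e. ann e0 = m). *)
Definition injective_hull_residue (m : R -> Prop) (E : lmodType R) : Prop :=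
  injective_module E /\
  exists e0 : E, (forall r, r *: e0 = 0 <-> m r) /\
    (forall e : E, e <> 0 -> exists r s, r *: e <> 0 /\ r *: e = s *: e0).

(* a is fully Phi(E)-special: (0 :_E a) lies in the 0th component of
   ann_{Phi(E)}(a R[x,f]), i.e. for every e in E with a e = 0, every r in a and
   every n, the element r x^n . e = (r x^n) (x) e of R x^n (x)_R E vanishes. *)
Definition fully_special (p : nat) (E : lmodType R) (a : R -> Prop) : Prop :=
  forall e : E, (forall r, a r -> r *: e = 0) ->
    forall (r : R) (n : nat), a r -> frob_tensor_zero p n r e.

End CommAlg.

From HB Require Import structures.
From mathcomp Require Import all_boot all_order all_algebra.
From Stdlib Require Import ClassicalEpsilon.
From mathcomp Require Import ring.
Set Implicit Arguments. Unset Strict Implicit. Unset Printing Implicit Defensive.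
Import GRing.Theory.
Local Open Scope ring_scope.

(* The fully Phi(E)-special proper ideals are closed under sums (all lie in m),
   so their union b is the largest one.  For primality, if x y lies in b and x
   does not, the colon ideal (b : x) is proper and contains y; it is again fully
   special: an element e killed by (b : x) is of the form x e' with b e' = 0
   (extend t + s x |-> s e from b + R x to R by injectivity of E), and then
   r x^n (x) e = r x^(p^n) x^n (x) e' = 0 because r x^(p^n) lies in b. *)

Section BaerCriterion.
Variables (R : comNzRingType) (I : R -> Prop).
Hypothesis I_ideal : is_idealP I.

Definition ideal_mem (x : R^o) : bool :=
  if excluded_middle_informative (I x) then true else false.

Lemma ideal_memP x : ideal_mem x <-> I x.
Proof. by rewrite /ideal_mem; case: excluded_middle_informative. Qed.

Fact ideal_mem_submod_closed : subsemimod_closed ideal_mem.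
Proof.
case: I_ideal => I0 ID IM; split; [split|].
- exact/ideal_memP.
- by move=> x y /ideal_memP Ix /ideal_memP Iy; apply/ideal_memP/ID.
- by move=> a x /ideal_memP Ix; apply/ideal_memP/IM.
Qed.
HB.instance Definition _ :=
  GRing.isSubmodClosed.Build R R^o ideal_mem ideal_mem_submod_closed.

Inductive ideal_sub : predArgType := IdealSub (u : R^o) of ideal_mem u.
Definition ideal_val (w : ideal_sub) : R^o := let: IdealSub u _ := w in u.
HB.instance Definition _ := [isSub for ideal_val].
HB.instance Definition _ := [Choice of ideal_sub by <:].
HB.instance Definition _ := [SubChoice_isSubLmodule of ideal_sub by <:].

Variables (E : lmodType R) (g : R -> E).
Hypothesis gD : forall x y, I x -> I y -> g (x + y) = g x + g y.
Hypothesis gZ : forall r x, I x -> g (r * x) = r *: g x.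

Definition ideal_map (w : ideal_sub) : E := g (val w).

Lemma ideal_map_is_linear : linear ideal_map.
Proof.
case: I_ideal => _ _ IM a [x xI] [y yI].
have [Ix Iy] := ((ideal_memP x).1 xI, (ideal_memP y).1 yI).
by rewrite /ideal_map /= gD ?gZ //; apply: IM.
Qed.
HB.instance Definition _ := GRing.isSemilinear.Build R ideal_sub E _ ideal_map
  (GRing.semilinear_linear ideal_map_is_linear).

Lemma baer_extension :
  injective_module E -> exists e : E, forall x, I x -> x *: e = g x.
Proof.
move=> injE; have [h hK] := injE _ _ (val : ideal_sub -> R^o) ideal_map val_inj.
exists (h 1) => x /ideal_memP xI.
have := hK (IdealSub xI); rewrite /= /ideal_map /= => <-.
by rewrite -linearZ /= [_ *: _]mulr1.
Qed.

End BaerCriterion.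

Section FrobeniusTensorZero.
Variables (R : comNzRingType) (p n : nat) (M : lmodType R).
Implicit Types (r s : R) (v : M).

Lemma frob_tensor_zero0 v : frob_tensor_zero p n 0 v.
Proof.
move=> N beta [betaD _ _]; apply: (addrI (beta 0 v)).
by rewrite -betaD !addr0.
Qed.

Lemma frob_tensor_zeroD s s' v :
  frob_tensor_zero p n s v -> frob_tensor_zero p n s' v ->
  frob_tensor_zero p n (s + s') v.
Proof.
move=> zs zs' N beta bal; case: (bal) => betaD _ _.
by rewrite betaD (zs _ _ bal) (zs' _ _ bal) addr0.
Qed.

Lemma frob_tensor_zero_scale r s v :
  frob_tensor_zero p n (s * r ^+ (p ^ n)) v -> frob_tensor_zero p n s (r *: v).
Proof. by move=> z N beta bal; case: (bal) => _ _ <-; apply: z. Qed.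

End FrobeniusTensorZero.

Section SpecialIdeals.
Variables (R : comNzRingType) (p : nat) (E : lmodType R).

Definition ideal_add (a b : R -> Prop) : R -> Prop :=
  fun x => exists y z, [/\ a y, b z & x = y + z].

Lemma ideal_add_ideal a b : is_idealP a -> is_idealP b -> is_idealP (ideal_add a b).
Proof.
move=> [a0 aD aM] [b0 bD bM]; split.
- by exists 0, 0; rewrite addr0.
- move=> _ _ [y1 [z1 [ay1 bz1 ->]]] [y2 [z2 [ay2 bz2 ->]]].
  by exists (y1 + y2), (z1 + z2); split; [apply: aD | apply: bD | ring].
- move=> r _ [y [z [ay bz ->]]].
  by exists (r * y), (r * z); split; [apply: aM | apply: bM | ring].
Qed.

Lemma proper_ideal_add (m a b : R -> Prop) :
  local_ring m -> proper_idealP a -> proper_idealP b -> proper_idealP (ideal_add a b).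
Proof.
move=> [[[_ mD _] m1] mmax] pa pb.
split; first exact: ideal_add_ideal pa.1 pb.1.
move=> [y [z [ay bz yz1]]]; apply: m1; rewrite yz1.
by apply: mD; [apply: (mmax a) | apply: (mmax b)].
Qed.

Lemma fully_special_add a b : is_idealP a -> is_idealP b ->
  fully_special p E a -> fully_special p E b -> fully_special p E (ideal_add a b).
Proof.
move=> [a0 _ _] [b0 _ _] sa sb e abe r n [y [z [ay bz ->]]].
apply: frob_tensor_zeroD.
- by apply: sa => // s as_; apply: abe; exists s, 0; rewrite addr0.
- by apply: sb => // s bs; apply: abe; exists 0, s; rewrite add0r.
Qed.

Definition colon_ideal (b : R -> Prop) (x : R) : R -> Prop := fun s => b (s * x).

Lemma colon_ideal_proper b x : is_idealP b -> ~ b x -> proper_idealP (colon_ideal b x).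
Proof.
move=> [b0 bD bM] bx; split; last by rewrite /colon_ideal mul1r.
split; rewrite /colon_ideal.
- by rewrite mul0r.
- by move=> s t bs bt; rewrite mulrDl; apply: bD.
- by move=> r s bs; rewrite -mulrA; apply: bM.
Qed.

Section ColonLift.
Variables (b : R -> Prop) (x : R) (e : E).
Hypotheses (b_ideal : is_idealP b) (colon_e : forall s, colon_ideal b x s -> s *: e = 0).

Definition adjoin_ideal : R -> Prop := fun z => exists s t, b t /\ z = t + s * x.

Lemma adjoin_ideal_ideal : is_idealP adjoin_ideal.
Proof.
case: b_ideal => b0 bD bM; split.
- by exists 0, 0; rewrite mul0r addr0.
- move=> _ _ [s1 [t1 [bt1 ->]]] [s2 [t2 [bt2 ->]]].
  by exists (s1 + s2), (t1 + t2); split; [apply: bD | ring].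
- move=> r _ [s [t [bt ->]]].
  by exists (r * s), (r * t); split; [apply: bM | ring].
Qed.

(* Only the coefficient of [x] is chosen; any two choices differ by an element
   of [colon_ideal b x], which kills [e]. *)
Definition adjoin_map (z : R) : E :=
  epsilon (inhabits 0) (fun s => exists t, b t /\ z = t + s * x) *: e.

Lemma adjoin_mapE t s : b t -> adjoin_map (t + s * x) = s *: e.
Proof.
case: b_ideal => _ bD bM bt; rewrite /adjoin_map.
case: (epsilon_spec (inhabits 0) (fun s' => exists t', b t' /\ t + s * x = t' + s' * x)).
  by exists s, t.
set s' := epsilon _ _ => t' [bt' eq_ts].
apply/eqP; rewrite -subr_eq0 -scalerBl; apply/eqP/colon_e.
rewrite /colon_ideal (_ : (s' - s) * x = t + (-1) * t'); first by apply: bD => //; apply: bM.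
by rewrite -[t](addrK (s * x)) eq_ts; ring.
Qed.

Lemma colon_lift : injective_module E ->
  exists e' : E, (forall t, b t -> t *: e' = 0) /\ x *: e' = e.
Proof.
case: (b_ideal) => b0 bD bM injE.
have mapD z1 z2 : adjoin_ideal z1 -> adjoin_ideal z2 ->
    adjoin_map (z1 + z2) = adjoin_map z1 + adjoin_map z2.
  move=> [s1 [t1 [bt1 ->]]] [s2 [t2 [bt2 ->]]].
  rewrite !adjoin_mapE // -scalerDl -(@adjoin_mapE (t1 + t2) (s1 + s2)); last exact: bD.
  by congr adjoin_map; ring.
have mapZ r z : adjoin_ideal z -> adjoin_map (r * z) = r *: adjoin_map z.
  move=> [s [t [bt ->]]].
  rewrite adjoin_mapE // scalerA -(@adjoin_mapE (r * t) (r * s)); last exact: bM.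
  by congr adjoin_map; ring.
have [e' e'E] := baer_extension adjoin_ideal_ideal mapD mapZ injE.
exists e'; split.
- move=> t bt; rewrite e'E; last by exists 0, t; rewrite mul0r addr0.
  by have := adjoin_mapE 0 bt; rewrite mul0r addr0 scale0r.
- rewrite e'E; last by exists 1, 0; rewrite mul1r add0r.
  by have := adjoin_mapE 1 b0; rewrite mul1r add0r scale1r.
Qed.

End ColonLift.

Lemma fully_special_colon b x : (0 < p)%N -> injective_module E -> is_idealP b ->
  fully_special p E b -> fully_special p E (colon_ideal b x).
Proof.
move=> p_gt0 injE b_ideal sb e colon_e r n bxr.
have [e' [be' <-]] := colon_lift b_ideal colon_e injE.
apply/frob_tensor_zero_scale/sb => //.
have pn_gt0 : (0 < p ^ n)%N by rewrite expn_gt0 p_gt0.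
case: b_ideal => _ _ bM.
rewrite -(prednK pn_gt0) exprS (_ : r * _ = x ^+ (p ^ n).-1 * (r * x)); last by ring.
exact: bM.
Qed.

Definition special_union : R -> Prop :=
  fun x => exists a, [/\ proper_idealP a, fully_special p E a & a x].

Lemma subideal_special_union a :
  proper_idealP a -> fully_special p E a -> subideal a special_union.
Proof. by move=> pa sa x ax; exists a. Qed.

Lemma fully_special_union : fully_special p E special_union.
Proof.
move=> e ue r n [a [pa sa ar]]; apply: (sa) => // s as_.
by apply: ue; apply: subideal_special_union pa sa s as_.
Qed.

Lemma proper_special_union (m : R -> Prop) :
  local_ring m -> proper_idealP special_union.
Proof.
move=> lm; split; last by move=> [a [[_ a1] _ a1']].
split.
- exists (fun x : R => x = 0); split; last by [].
  + split; last by move/eqP; rewrite oner_eq0.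
    by split=> [|_ _ -> ->|r _ ->]; rewrite ?addr0 ?mulr0.
  + by move=> e _ r n ->; apply: frob_tensor_zero0.
- move=> x y [a [pa sa ax]] [c [pc sc cy]].
  exists (ideal_add a c); split.
  + exact: proper_ideal_add lm pa pc.
  + exact: fully_special_add pa.1 pc.1 sa sc.
  + by exists x, y.
- move=> r x [a [pa sa ax]]; exists a; split => //.
  by case: pa.1 => _ _ aM; apply: aM.
Qed.

Lemma prime_special_union (m : R -> Prop) : (0 < p)%N -> local_ring m ->
  injective_module E -> prime_idealP special_union.
Proof.
move=> p_gt0 lm injE; have pu := proper_special_union lm.
split=> // x y uxy; case: (classic (special_union x)) => ux; [by left | right].
apply: (subideal_special_union (colon_ideal_proper pu.1 ux)).
- exact: fully_special_colon pu.1 fully_special_union.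
- by rewrite /colon_ideal mulrC.
Qed.

End SpecialIdeals.

Theorem corollary1p10 (p : nat) (R : comNzRingType) (m : R -> Prop)
  (E : lmodType R) :
  p \in [pchar R]%R ->
  noetherian_ring R ->
  local_ring m ->
  injective_hull_residue m E ->
  F_pure R p ->
  exists b : R -> Prop,
    [/\ proper_idealP b, fully_special p E b,
        (forall a : R -> Prop, proper_idealP a -> fully_special p E a ->
            subideal a b)
      & prime_idealP b].
Proof.
move=> pchar_p _ lm [injE _] _.
have p_gt0 : (0 < p)%N by rewrite prime_gt0 // (pcharf_prime pchar_p).
exists (special_union p E); split.
- exact: proper_special_union lm.
- exact: fully_special_union.
- exact: subideal_special_union.
- exact: prime_special_union lm injE.
Qed.
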